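(* The set $T$ is good and full.
   Context: Let $X_1,X_2,X_3$ be pairwise disjoint nonempty sets and $\Omega=X_1\times X_2\times X_3$, with projections $\Pi_i:\Omega\to X_i$. For $S\subset\Omega$, the coordinates of $S$ are the elements of $\Pi_1S\cup\Pi_2S\cup\Pi_3S$. A set $S\subset\Omega$ is good if every function $f:S\to\mathbb C$ can be written $f(w_1,w_2,w_3)=u_1(w_1)+u_2(w_2)+u_3(w_3)$ for all $(w_1,w_2,w_3)\in S$, for some functions $u_i:X_i\to\mathbb C$. A set $S$ is full if it is a maximal good subset of $\Pi_1S\times\Pi_2S\times\Pi_3S$. Construction: fix pairwise distinct elements $x_1,y_1,\alpha_{5k-4},\alpha_{5k-1}$ ($k\ge1$) of $X_1$; pairwise distinct elements $x_2,y_2,\alpha_{5k-3},\alpha_{5k}$ ($k\ge1$) of $X_2$; pairwise distinct elements $x_3,z_3,\alpha_{5k-2}$ ($k\ge1$) of $X_3$. Set the convention $\alpha_{-3}:=y_2$, $\alpha_{-2}:=z_3$. Define $a_1=(x_1,x_2,x_3)$, $a_2=(y_1,y_2,x_3)$, $a_3=(y_1,x_2,z_3)$ and for $n\ge1$: $a_{5n-1}=(\alpha_{5n-4},\alpha_{5n-3},\alpha_{5n-2})$, $a_{5n}=(\alpha_{5n-1},\alpha_{5n},\alpha_{5n-2})$, $a_{5n+1}=(\alpha_{5n-4},\alpha_{5n},\alpha_{5n-7})$, $a_{5n+2}=(\alpha_{5n-1},\alpha_{5n-3},x_3)$, $a_{5n+3}=(x_1,\alpha_{5n-8},\alpha_{5n-2})$.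 Let $T=\{a_i:i\ge1\}$. *)

(* Stdlib (classical reals).  Complex numbers are modelled as R*R with
   componentwise addition: the notion "good" only uses the additive group of C. *)
From Stdlib Require Import Reals Arith.
Open Scope R_scope.

Definition CC : Type := (R * R)%type.
Definition Cadd (z w : CC) : CC := (fst z + fst w, snd z + snd w).

Section Defs.
Variables X1 X2 X3 : Type.
Definition Omega : Type := (X1 * X2 * X3)%type.
Definition p1 (w : Omega) : X1 := fst (fst w).
Definition p2 (w : Omega) : X2 := snd (fst w).
Definition p3 (w : Omega) : X3 := snd w.

Definition good (S : Omega -> Prop) : Prop :=
  forall f : {w : Omega | S w} -> CC,
    exists (u1 : X1 -> CC) (u2 : X2 -> CC) (u3 : X3 -> CC),
      forall w : {w : Omega | S w},
        f w = Cadd (Cadd (u1 (p1 (proj1_sig w))) (u2 (p2 (proj1_sig w))))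
                   (u3 (p3 (proj1_sig w))).

Definition box (S : Omega -> Prop) (w : Omega) : Prop :=
  (exists v, S v /\ p1 v = p1 w) /\ (exists v, S v /\ p2 v = p2 w) /\
  (exists v, S v /\ p3 v = p3 w).

Definition full (S : Omega -> Prop) : Prop :=
  good S /\
  forall S' : Omega -> Prop,
    (forall w, S w -> S' w) -> (forall w, S' w -> box S w) -> good S' ->
    forall w, S' w -> S w.
End Defs.

Definition distinct_fam {X : Type} (x y : X) (al be : nat -> X) : Prop :=
  x <> y /\
  (forall k, (1 <= k)%nat -> al k <> x /\ al k <> y /\ be k <> x /\ be k <> y) /\
  (forall k l, (1 <= k)%nat -> (1 <= l)%nat ->
     (al k = al l -> k = l) /\ (be k = be l -> k = l) /\ al k <> be l).

(* Encoding of the alpha's (k >= 1):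
   a k = alpha_{5k-4}, b k = alpha_{5k-1}   (in X1)
   c k = alpha_{5k-3}, d k = alpha_{5k}     (in X2)
   e k = alpha_{5k-2}                        (in X3)
   conventions alpha_{-3} := y2, alpha_{-2} := z3, i.e. index k = 0: *)
Definition cconv {X2 : Type} (y2 : X2) (c : nat -> X2) (k : nat) : X2 :=
  if Nat.eqb k 0 then y2 else c k.
Definition econv {X3 : Type} (z3 : X3) (e : nat -> X3) (k : nat) : X3 :=
  if Nat.eqb k 0 then z3 else e k.

(* The set T = { a_i : i >= 1 } *)
Definition Tset {X1 X2 X3 : Type} (x1 y1 : X1) (a b : nat -> X1)
  (x2 y2 : X2) (c d : nat -> X2) (x3 z3 : X3) (e : nat -> X3)
  (w : Omega X1 X2 X3) : Prop :=
  w = (x1, x2, x3) \/                                    (* a_1 *)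
  w = (y1, y2, x3) \/                                    (* a_2 *)
  w = (y1, x2, z3) \/                                    (* a_3 *)
  exists n : nat, (1 <= n)%nat /\
    ( w = (a n, c n, e n)                                (* a_{5n-1} *)
   \/ w = (b n, d n, e n)                                (* a_{5n}   *)
   \/ w = (a n, d n, econv z3 e (n - 1))                 (* a_{5n+1} *)
   \/ w = (b n, c n, x3)                                 (* a_{5n+2} *)
   \/ w = (x1, cconv y2 c (n - 1), e n) ).               (* a_{5n+3} *)

(* Since "good" only involves the additive group of C = R x R, a set S is good
   iff every REAL function on Omega is a sum u1 + u2 + u3 on S, each real and
   imaginary part being handled separately (good_iff_real_good).

   Fullness follows from a rigidity property: a set S is rigid when every real
   additive relation u1 + u2 + u3 = 0 holding on S also holds on its whole box.
   A good rigid set is full: a good S' with S <= S' <= box S would carry the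
   indicator function of S' \ S as a sum u1 + u2 + u3, which vanishes on S, hence
   on box S by rigidity, so S' \ S is empty (full_of_rigid).

   For T both facts reduce to an infinite linear system in the values of u1, u2,
   u3 at the coordinates of T, block n coupling the coordinates of index n and
   n - 1.  Its homogeneous version forces u1, u2, u3 to be constant on the
   projections of T (T_relation_constant), which gives rigidity; the
   inhomogeneous version is solved by a two-term recurrence (T_system_solvable),
   and the pairwise distinctness of the coordinates lets us realize the
   solution by actual functions u1, u2, u3 (interpolate_two_seq/_one_seq). *)
From Stdlib Require Import Reals Lra Lia Classical ClassicalEpsilon ProofIrrelevance.
Open Scope R_scope.

#[local] Arguments p1 {X1 X2 X3} w.
#[local] Arguments p2 {X1 X2 X3} w.
#[local] Arguments p3 {X1 X2 X3} w.

Lemma extend_injective {I X V : Type} (D : I -> Prop) (pt : I -> X)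
  (val : I -> V) (v0 : V) :
  (forall i j, D i -> D j -> pt i = pt j -> i = j) ->
  exists u : X -> V, forall i, D i -> u (pt i) = val i.
Proof.
  intro Hinj.
  assert (Hval : forall p, exists v, forall i, D i -> pt i = p -> v = val i).
  { intro p. destruct (classic (exists i, D i /\ pt i = p)) as [[i [Di Ei]]|Hno].
    - exists (val i). intros j Dj Ej. rewrite (Hinj i j Di Dj) by congruence. reflexivity.
    - exists v0. intros j Dj Ej. exfalso. eauto. }
  destruct (choice _ Hval) as [u Hu].
  exists u. intros i Di. exact (Hu _ i Di eq_refl).
Qed.

(* Labels of the coordinates of T in one factor: a base point x, an alternative
   point y and two sequences indexed from 1. *)
Inductive coord_label : Type :=
  | base_pt | alt_pt | seq1_pt (n : nat) | seq2_pt (n : nat).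

Definition label_point {X : Type} (x y : X) (al be : nat -> X) (l : coord_label) : X :=
  match l with
  | base_pt => x | alt_pt => y | seq1_pt n => al n | seq2_pt n => be n
  end.

Lemma interpolate_two_seq {X V : Type} (x y : X) (al be : nat -> X)
  (H : distinct_fam x y al be) (vx vy : V) (va vb : nat -> V) :
  exists u : X -> V, u x = vx /\ u y = vy /\
    forall n, (1 <= n)%nat -> u (al n) = va n /\ u (be n) = vb n.
Proof.
  destruct H as (Hxy & Hk & Hkl).
  pose (D l := match l with seq1_pt n | seq2_pt n => (1 <= n)%nat | _ => True end).
  destruct (extend_injective D (label_point x y al be) (label_point vx vy va vb) vx)
    as [u Hu].
  - intros [| |n|n] [| |m|m]; cbn; intros Dl Dm E; try reflexivity;
      try destruct (Hk _ Dl) as (?&?&?&?); try destruct (Hk _ Dm) as (?&?&?&?);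
      try destruct (Hkl _ _ Dl Dm) as (?&?&?); try destruct (Hkl _ _ Dm Dl) as (?&?&?);
      try congruence; f_equal; auto.
  - exists u. split; [exact (Hu base_pt I)|]. split; [exact (Hu alt_pt I)|].
    intros n Hn. exact (conj (Hu (seq1_pt n) Hn) (Hu (seq2_pt n) Hn)).
Qed.

Lemma interpolate_one_seq {X V : Type} (x z : X) (e : nat -> X)
  (H : x <> z /\ (forall k, (1 <= k)%nat -> e k <> x /\ e k <> z) /\
       (forall k l, (1 <= k)%nat -> (1 <= l)%nat -> e k = e l -> k = l))
  (vx vz : V) (ve : nat -> V) :
  exists u : X -> V, u x = vx /\ u z = vz /\
    forall n, (1 <= n)%nat -> u (e n) = ve n.
Proof.
  destruct H as (Hxz & Hk & Hkl).
  pose (D l := match l with seq1_pt n => (1 <= n)%nat | seq2_pt _ => False | _ => True end).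
  destruct (extend_injective D (label_point x z e e) (label_point vx vz ve ve) vx)
    as [u Hu].
  - intros [| |n|n] [| |m|m]; cbn; intros Dl Dm E; try reflexivity; try contradiction;
      try destruct (Hk _ Dl) as (?&?); try destruct (Hk _ Dm) as (?&?);
      try congruence; f_equal; auto.
  - exists u. split; [exact (Hu base_pt I)|]. split; [exact (Hu alt_pt I)|].
    intros n Hn. exact (Hu (seq1_pt n) Hn).
Qed.

Lemma cconv_pos {X : Type} (y : X) (al : nat -> X) (n : nat) :
  (1 <= n)%nat -> cconv y al n = al n.
Proof. intro Hn. unfold cconv. destruct (Nat.eqb_spec n 0); [lia|reflexivity]. Qed.

Lemma econv_pos {X : Type} (z : X) (e : nat -> X) (n : nat) :
  (1 <= n)%nat -> econv z e n = e n.
Proof. exact (cconv_pos z e n). Qed.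

Lemma cconv_value {X V : Type} (u : X -> V) (y : X) (al : nat -> X) (v : nat -> V) :
  u y = v O -> (forall n, (1 <= n)%nat -> u (al n) = v n) ->
  forall k, u (cconv y al k) = v k.
Proof.
  intros H0 Hpos [|k]; [exact H0|].
  rewrite cconv_pos by lia. apply Hpos. lia.
Qed.

(* The linear system of T: with u1 x1 = u2 x2 = 0 and u3 x3 = P1 = f a_1, the
   unknowns are vy1 = u1 y1, va, vb (values of u1), vc, vd (of u2, vc 0 = u2 y2)
   and ve (of u3, ve 0 = u3 z3); the equations are those of a_2, a_3 and of the
   five points a_{5n-1}, ..., a_{5n+3} of block n. *)
Section TSystem.
Variables (P1 P2 P3 : R) (F1 F2 F3 F4 F5 : nat -> R).

(* Eliminating va, vb, vd from block n+1 gives 2 vc n + ve n = rhs (n+1) and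
   ve (n+1) = F5 (n+1) - vc n, a recurrence for the pair (vc n, ve n); the
   equations of a_2, a_3 fix its initial value together with s = vy1. *)
Let rhs (n : nat) : R := 2 * F5 n - P1 - (F1 n + F2 n - F3 n - F4 n).
Let s : R := (2 * (P2 - P1) + P3 - rhs 1) / 3.

Fixpoint ce_seq (n : nat) : R * R :=
  match n with
  | O => (P2 - P1 - s, P3 - s)
  | S k => let ve := F5 (S k) - fst (ce_seq k) in ((rhs (S (S k)) - ve) / 2, ve)
  end.

Lemma ce_seq_invariant (n : nat) : 2 * fst (ce_seq n) + snd (ce_seq n) = rhs (S n).
Proof. destruct n; cbn [ce_seq fst snd]; unfold s; field. Qed.

Lemma T_system_solvable :
  exists (vy1 : R) (va vb vc vd ve : nat -> R),
    vy1 + vc O + P1 = P2 /\ vy1 + 0 + ve O = P3 /\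
    forall n, (1 <= n)%nat ->
      va n + vc n + ve n = F1 n /\ vb n + vd n + ve n = F2 n /\
      va n + vd n + ve (n - 1)%nat = F3 n /\ vb n + vc n + P1 = F4 n /\
      0 + vc (n - 1)%nat + ve n = F5 n.
Proof.
  pose (vc n := fst (ce_seq n)). pose (ve n := snd (ce_seq n)).
  pose (va n := F1 n - vc n - ve n).
  exists s, va, (fun n => F4 n - P1 - vc n), vc,
    (fun n => F3 n - ve (n - 1)%nat - va n), ve.
  split; [unfold vc; cbn; lra|]. split; [unfold ve; cbn; lra|].
  intros [|m] Hm; [lia|]. replace (S m - 1)%nat with m by lia.
  pose proof (ce_seq_invariant m) as Hinv.
  assert (Hve : ve (S m) = F5 (S m) - vc m) by reflexivity.
  cbv beta; unfold va, vc, ve, rhs in *. lra.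
Qed.
End TSystem.

Lemma T_system_rigid (ux1 uy1 ux2 ux3 : R) (va vb vc vd ve : nat -> R) :
  ux1 + ux2 + ux3 = 0 -> uy1 + vc O + ux3 = 0 -> uy1 + ux2 + ve O = 0 ->
  (forall n, (1 <= n)%nat ->
     va n + vc n + ve n = 0 /\ vb n + vd n + ve n = 0 /\
     va n + vd n + ve (n - 1)%nat = 0 /\ vb n + vc n + ux3 = 0 /\
     ux1 + vc (n - 1)%nat + ve n = 0) ->
  uy1 = ux1 /\ (forall n, vc n = ux2) /\ (forall n, ve n = ux3) /\
  (forall n, (1 <= n)%nat -> va n = ux1 /\ vb n = ux1 /\ vd n = ux2).
Proof.
  intros Ha1 Ha2 Ha3 Hblk.
  assert (Hy : uy1 = ux1).
  { destruct (Hblk 1%nat (le_n 1)) as (?&?&?&?&?). simpl in *. lra. }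
  (* ve 0 = ux3 by a_1, a_3 and uy1 = ux1; block n gives 2 ve n - ve (n-1) = ux3 *)
  assert (He : forall n, ve n = ux3).
  { induction n as [|m IH]; [lra|].
    destruct (Hblk (S m) ltac:(lia)) as (?&?&?&?&?).
    replace (S m - 1)%nat with m in * by lia. lra. }
  assert (Hc : forall n, vc n = ux2).
  { intro n. destruct (Hblk (S n) ltac:(lia)) as (?&?&?&?&?).
    replace (S n - 1)%nat with n in * by lia. pose proof (He (S n)). lra. }
  split; [exact Hy|]. split; [exact Hc|]. split; [exact He|].
  intros n Hn. destruct (Hblk n Hn) as (?&?&?&?&?).
  pose proof (He n). pose proof (He (n - 1)%nat). pose proof (Hc n). lra.
Qed.

Section GoodAndRigid.
Variables X1 X2 X3 : Type.

Definition real_good (S : Omega X1 X2 X3 -> Prop) : Prop :=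
  forall f : Omega X1 X2 X3 -> R,
    exists (u1 : X1 -> R) (u2 : X2 -> R) (u3 : X3 -> R),
      forall w, S w -> f w = u1 (p1 w) + u2 (p2 w) + u3 (p3 w).

Definition rigid (S : Omega X1 X2 X3 -> Prop) : Prop :=
  forall (u1 : X1 -> R) (u2 : X2 -> R) (u3 : X3 -> R),
    (forall w, S w -> u1 (p1 w) + u2 (p2 w) + u3 (p3 w) = 0) ->
    forall w, box X1 X2 X3 S w -> u1 (p1 w) + u2 (p2 w) + u3 (p3 w) = 0.

(* C is R x R as an additive group, so goodness can be checked on real and
   imaginary parts separately; a function on S is extended by 0 to Omega. *)
Lemma good_iff_real_good (S : Omega X1 X2 X3 -> Prop) :
  good X1 X2 X3 S <-> real_good S.
Proof.
  split.
  - intros Hgood f.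
    destruct (Hgood (fun w => (f (proj1_sig w), 0))) as (u1 & u2 & u3 & Hu).
    exists (fun x => fst (u1 x)), (fun x => fst (u2 x)), (fun x => fst (u3 x)).
    intros w Hw. exact (f_equal fst (Hu (exist _ w Hw))).
  - intros Hreal f.
    pose (g w := match excluded_middle_informative (S w) with
                 | left Hw => f (exist _ w Hw) | right _ => (0, 0) end).
    destruct (Hreal (fun w => fst (g w))) as (u1 & u2 & u3 & Hu).
    destruct (Hreal (fun w => snd (g w))) as (v1 & v2 & v3 & Hv).
    exists (fun x => (u1 x, v1 x)), (fun x => (u2 x, v2 x)), (fun x => (u3 x, v3 x)).
    intros [w Hw]. cbn [proj1_sig].
    assert (Hg : f (exist _ w Hw) = g w).
    { unfold g. destruct (excluded_middle_informative (S w)) as [Hw'|]; [|contradiction].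
      rewrite (proof_irrelevance _ Hw Hw'). reflexivity. }
    rewrite Hg, (surjective_pairing (g w)), (Hu w Hw), (Hv w Hw). reflexivity.
Qed.

Lemma rigid_of_constant_projections (S : Omega X1 X2 X3 -> Prop) (w0 : Omega X1 X2 X3) :
  S w0 ->
  (forall u1 u2 u3,
     (forall w, S w -> u1 (p1 w) + u2 (p2 w) + u3 (p3 w) = 0) ->
     forall v, S v -> u1 (p1 v) = u1 (p1 w0) /\ u2 (p2 v) = u2 (p2 w0) /\
                      u3 (p3 v) = u3 (p3 w0)) ->
  rigid S.
Proof.
  intros Hw0 Hconst u1 u2 u3 Hrel w ([v1 [Hv1 E1]] & [v2 [Hv2 E2]] & [v3 [Hv3 E3]]).
  destruct (Hconst u1 u2 u3 Hrel v1 Hv1) as (C1 & _ & _).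
  destruct (Hconst u1 u2 u3 Hrel v2 Hv2) as (_ & C2 & _).
  destruct (Hconst u1 u2 u3 Hrel v3 Hv3) as (_ & _ & C3).
  rewrite <- E1, <- E2, <- E3, C1, C2, C3. exact (Hrel w0 Hw0).
Qed.

(* A good rigid set is full: S' \ S is detected by its indicator function. *)
Lemma full_of_rigid (S : Omega X1 X2 X3 -> Prop) :
  good X1 X2 X3 S -> rigid S -> full X1 X2 X3 S.
Proof.
  intros Hgood Hrigid. split; [exact Hgood|].
  intros S' Hsub Hbox Hgood' w Hw.
  destruct (classic (S w)) as [|HnS]; [assumption|exfalso].
  apply good_iff_real_good in Hgood'.
  destruct (Hgood' (fun v => if excluded_middle_informative (S v) then 0 else 1))
    as (u1 & u2 & u3 & Hu).
  assert (Hrel : forall v, S v -> u1 (p1 v) + u2 (p2 v) + u3 (p3 v) = 0).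
  { intros v Hv. rewrite <- (Hu v (Hsub v Hv)).
    destruct (excluded_middle_informative (S v)); [reflexivity|contradiction]. }
  pose proof (Hrigid u1 u2 u3 Hrel w (Hbox w Hw)) as Hzero.
  rewrite <- (Hu w Hw) in Hzero.
  destruct (excluded_middle_informative (S w)); [contradiction|lra].
Qed.
End GoodAndRigid.

Section TheSetT.
Variables (X1 X2 X3 : Type) (x1 y1 : X1) (a b : nat -> X1)
  (x2 y2 : X2) (c d : nat -> X2) (x3 z3 : X3) (e : nat -> X3).

Let T : Omega X1 X2 X3 -> Prop := Tset x1 y1 a b x2 y2 c d x3 z3 e.

Lemma T_relation_constant (u1 : X1 -> R) (u2 : X2 -> R) (u3 : X3 -> R) :
  (forall w, T w -> u1 (p1 w) + u2 (p2 w) + u3 (p3 w) = 0) ->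
  forall v, T v -> u1 (p1 v) = u1 x1 /\ u2 (p2 v) = u2 x2 /\ u3 (p3 v) = u3 x3.
Proof.
  intro Hrel.
  assert (HT : forall p q r, T (p, q, r) -> u1 p + u2 q + u3 r = 0)
    by (intros p q r Ht; exact (Hrel _ Ht)).
  destruct (T_system_rigid (u1 x1) (u1 y1) (u2 x2) (u3 x3)
     (fun n => u1 (a n)) (fun n => u1 (b n)) (fun n => u2 (cconv y2 c n))
     (fun n => u2 (d n)) (fun n => u3 (econv z3 e n))) as (Hy & Hc & He & Hab).
  - apply HT. left. reflexivity.
  - apply HT. right; left. reflexivity.
  - apply HT. right; right; left. reflexivity.
  - intros n Hn. cbv beta. rewrite (cconv_pos y2 c n Hn), (econv_pos z3 e n Hn).
    repeat split; apply HT; right; right; right; exists n; split; auto.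
  - cbv beta in *.
    assert (Hy2 : u2 y2 = u2 x2) by exact (Hc O).
    assert (Hz3 : u3 z3 = u3 x3) by exact (He O).
    assert (Hcd : forall n, (1 <= n)%nat -> u2 (c n) = u2 x2 /\ u3 (e n) = u3 x3).
    { intros n Hn. rewrite <- (cconv_pos y2 c n Hn), <- (econv_pos z3 e n Hn). auto. }
    intros v [E|[E|[E|[n [Hn [E|[E|[E|[E|E]]]]]]]]]; subst v; cbn [p1 p2 p3 fst snd];
      try destruct (Hab n Hn) as (Ha & Hb & Hd); try destruct (Hcd n Hn);
      repeat split; auto.
Qed.

Lemma T_rigid : rigid X1 X2 X3 T.
Proof.
  apply (rigid_of_constant_projections X1 X2 X3 T (x1, x2, x3)); [left; reflexivity|].
  exact T_relation_constant.
Qed.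

Lemma T_real_good
  (H1 : distinct_fam x1 y1 a b) (H2 : distinct_fam x2 y2 c d)
  (H3 : x3 <> z3 /\ (forall k, (1 <= k)%nat -> e k <> x3 /\ e k <> z3) /\
        (forall k l, (1 <= k)%nat -> (1 <= l)%nat -> e k = e l -> k = l)) :
  real_good X1 X2 X3 T.
Proof.
  intro f.
  destruct (T_system_solvable (f (x1, x2, x3)) (f (y1, y2, x3)) (f (y1, x2, z3))
     (fun n => f (a n, c n, e n)) (fun n => f (b n, d n, e n))
     (fun n => f (a n, d n, econv z3 e (n - 1))) (fun n => f (b n, c n, x3))
     (fun n => f (x1, cconv y2 c (n - 1), e n)))
    as (vy1 & va & vb & vc & vd & ve & Ha2 & Ha3 & Hblk).
  destruct (interpolate_two_seq x1 y1 a b H1 0 vy1 va vb) as (u1 & U1x & U1y & U1n).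
  destruct (interpolate_two_seq x2 y2 c d H2 0 (vc O) vc vd) as (u2 & U2x & U2y & U2n).
  destruct (interpolate_one_seq x3 z3 e H3 (f (x1, x2, x3)) (ve O) ve) as (u3 & U3x & U3z & U3n).
  assert (U2c : forall k, u2 (cconv y2 c k) = vc k)
    by (apply cconv_value; [exact U2y | intros n Hn; apply (U2n n Hn)]).
  assert (U3e : forall k, u3 (econv z3 e k) = ve k)
    by (apply cconv_value; [exact U3z | exact U3n]).
  exists u1, u2, u3.
  intros w [E|[E|[E|[n [Hn [E|[E|[E|[E|E]]]]]]]]]; subst w; cbn [p1 p2 p3 fst snd];
    rewrite ?U1x, ?U1y, ?U2x, ?U2y, ?U3x, ?U3z, ?U2c, ?U3e; try lra;
    destruct (U1n n Hn) as [Ua Ub]; destruct (U2n n Hn) as [Uc Ud];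
    rewrite ?Ua, ?Ub, ?Uc, ?Ud, ?(U3n n Hn);
    destruct (Hblk n Hn) as (?&?&?&?&?); cbv beta in *; lra.
Qed.
End TheSetT.

Theorem mainTheorem3 (X1 X2 X3 : Type)
  (x1 y1 : X1) (a b : nat -> X1)
  (x2 y2 : X2) (c d : nat -> X2)
  (x3 z3 : X3) (e : nat -> X3)
  (H1 : distinct_fam x1 y1 a b)
  (H2 : distinct_fam x2 y2 c d)
  (H3 : x3 <> z3 /\ (forall k, (1 <= k)%nat -> e k <> x3 /\ e k <> z3) /\
        (forall k l, (1 <= k)%nat -> (1 <= l)%nat -> e k = e l -> k = l)) :
  good X1 X2 X3 (Tset x1 y1 a b x2 y2 c d x3 z3 e) /\
  full X1 X2 X3 (Tset x1 y1 a b x2 y2 c d x3 z3 e).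
Proof.
  assert (Hgood : good X1 X2 X3 (Tset x1 y1 a b x2 y2 c d x3 z3 e)).
  { apply good_iff_real_good. exact (T_real_good X1 X2 X3 x1 y1 a b x2 y2 c d x3 z3 e H1 H2 H3). }
  split; [exact Hgood|].
  apply full_of_rigid; [exact Hgood|].
  exact (T_rigid X1 X2 X3 x1 y1 a b x2 y2 c d x3 z3 e).
Qed.
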